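(* Fix an integer $k\ge2$ and $\delta\in(0,2)$. Let $\mathcal R_n(1),\dots,\mathcal R_n(k)$ be independent random sets, each distributed as $\mathcal S_{n,1}(1)$. Then, uniformly over $\bar J\in\mathcal B_{n,k,\delta}$, \[\mathbb P\big(\mathcal S_{n,1}(i)=J_i,\ i\in[k]\big)=(1+o(1))\,\mathbb P\big(\mathcal R_n(i)=J_i,\ i\in[k]\big)\quad\text{as }n\to\infty.\]
   Context: Kingman's $n$-coalescent $(F_n,\dots,F_1)$: forests on $[n]$; $F_n$ has no edges; for $2\le i\le n$, list the trees of $F_i$ as $T^{(i)}_1,\dots,T^{(i)}_i$ in increasing order of smallest label, choose $\{a_i,b_i\}$ uniformly among 2-subsets of $[i]$ and an independent fair bit $\xi_i$ (independent over $i$), and obtain $F_{i-1}$ by joining the roots of $T^{(i)}_{a_i},T^{(i)}_{b_i}$ by an edge directed according to $\xi_i$. $T_i(v)$ is the tree of $F_i$ containing $v$; $\mathcal S_n(v)=\{2\le i\le n:T_i(v)\in\{T^{(i)}_{a_i},T^{(i)}_{b_i}\}\}$; $\mathcal S_{n,1}(v)=\mathcal S_n(v)\setminus[\lfloor\ln^2 n\rfloor]$ (so $\mathcal S_{n,1}(1)$ contains each $m\in\{\lfloor\ln^2 n\rfloor+1,\dots,n\}$ independently with probability $2/m$). $\Omega_1$ is the power set of $\{\lfloor\ln^2 n\rfloor+1,\dots,n\}$, and for $\delta\in(0,2)$, $\mathcal B_{n,k,\delta}$ is the set of $\bar J=(J_1,\dots,J_k)\in\Omega_1^k$ with $J_1,\dots,J_k$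 pairwise disjoint and $||J_i|-2\ln n|\le\delta\ln n$ for all $i\in[k]$. *)

From Stdlib Require Import Reals List Arith ZArith Bool.
Import ListNotations.
Open Scope R_scope.

(* One step of randomness at stage i: a 2-subset {a,b} of [i], encoded
   0-based as (a,b) with a < b < i, together with the direction bit xi. *)
Definition step := (nat * nat * bool)%type.

Definition choices (i : nat) : list step :=
  flat_map (fun b => flat_map (fun a => [(a, b, true); (a, b, false)]) (seq 0 b))
           (seq 0 i).

(* All outcomes (c_i, c_{i-1}, ..., c_2) of the choices at stages i down to 2;
   each outcome is equally likely (independent uniform choices). *)
Fixpoint outcomes (i : nat) : list (list step) :=
  match i with
  | 0 => [[]]
  | S 0 => [[]]
  | S ((S _) as i') => flat_map (fun c => map (cons c) (outcomes i')) (choices i)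
  end.

Definition prob_coal (n : nat) (ev : list step -> bool) : R :=
  INR (length (filter ev (outcomes n))) / INR (length (outcomes n)).

(* A forest state is recorded by its trees' vertex sets (list of blocks),
   listed in increasing order of smallest label. *)
Fixpoint replace_nth {A} (j : nat) (x : A) (l : list A) : list A :=
  match l, j with
  | [], _ => []
  | _ :: t, 0%nat => x :: t
  | h :: t, S j' => h :: replace_nth j' x t
  end.

Fixpoint remove_nth {A} (j : nat) (l : list A) : list A :=
  match l, j with
  | [], _ => []
  | _ :: t, 0%nat => t
  | h :: t, S j' => h :: remove_nth j' t
  end.

(* Joining trees a < b: the union has the smallest label of tree a, so the
   increasing-min-label order is kept by putting it at position a and
   deleting position b. *)
Definition merge (st : list (list nat)) (a b : nat) : list (list nat) :=
  remove_nth b (replace_nth a (nth a st [] ++ nth b st []) st).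

Fixpoint find_block (v : nat) (st : list (list nat)) : nat :=
  match st with
  | [] => 0%nat
  | B :: t => if existsb (Nat.eqb v) B then 0%nat else S (find_block v t)
  end.

Fixpoint run (i : nat) (st : list (list nat)) (om : list step) (v : nat) : list nat :=
  match om with
  | [] => []
  | (a, b, _) :: rest =>
      let iv := find_block v st in
      (if (iv =? a)%nat || (iv =? b)%nat then [i] else [])
        ++ run (pred i) (merge st a b) rest v
  end.

Definition S_n (n : nat) (om : list step) (v : nat) : list nat :=
  run n (map (fun j => [j]) (seq 1 n)) om v.

Definition Lcut (n : nat) : nat := Z.to_nat (Int_part (ln (INR n) ^ 2)).

Definition S1_eq (n : nat) (om : list step) (v : nat) (J : nat -> bool) : bool :=
  forallb (fun m => Bool.eqb (existsb (Nat.eqb m) (S_n n om v) && (Lcut n <? m)%nat) (J m))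
          (seq 0 (S n)).

Definition probS (n k : nat) (J : nat -> nat -> bool) : R :=
  prob_coal n (fun om => forallb (fun i => S1_eq n om i (J i)) (seq 1 k)).

Definition probR (n k : nat) (J : nat -> nat -> bool) : R :=
  fold_right Rmult 1 (map (fun i => prob_coal n (fun om => S1_eq n om 1 (J i))) (seq 1 k)).

Definition card_upto (n : nat) (A : nat -> bool) : nat := length (filter A (seq 0 (S n))).

Definition in_B (n k : nat) (delta : R) (J : nat -> nat -> bool) : Prop :=
  (forall i, (1 <= i <= k)%nat -> forall m, J i m = true -> (Lcut n < m <= n)%nat) /\
  (forall i j, (1 <= i <= k)%nat -> (1 <= j <= k)%nat -> i <> j ->
     forall m, J i m = true -> J j m = false) /\
  (forall i, (1 <= i <= k)%nat ->
     Rabs (INR (card_upto n (J i)) - 2 * ln (INR n)) <= delta * ln (INR n)).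

(* Follow the trees of 1, ..., k through the coalescent by their positions in the forest.
   Above the cut L = floor(ln^2 n) the event {S_{n,1}(v) = J_v for all v} dictates, at each
   stage i, either which single tracked tree must be joined (the J_v are disjoint) or that
   none is; the number of admissible pairs is then i - k, resp. C(i - k, 2), wherever the
   tracked trees sit. So the probability is the product over L < i <= n of these counts
   divided by C(i, 2), and the same formula with k = 1 gives every factor of the
   independent product. Stage by stage the two ratios agree within a factor in
   [1 - e_i, exp e_i], with e_i = O(k^2 / i^2) + O(k / i) [i in U J_v]; as |U J_v| = O(k ln n)
   the errors sum to O(k^2 ln n / L) = O(k^2 / ln n). *)

From Stdlib Require Import Reals List Arith Lia Lra ZArith Bool.
Import ListNotations.

Open Scope nat_scope.

Lemma length_replace_nth {A} (j : nat) (x : A) l : length (replace_nth j x l) = length l.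
Proof. revert j; induction l; intros [|j]; simpl; auto. Qed.

Lemma length_remove_nth {A} (j : nat) (l : list A) :
  j < length l -> length (remove_nth j l) = pred (length l).
Proof.
  revert j; induction l as [|x l IH]; intros [|j] Hj; simpl in *; try lia.
  rewrite IH by lia. destruct l; simpl in *; lia.
Qed.

Lemma nth_replace_nth {A} (j q : nat) (x : A) l d : j < length l ->
  nth q (replace_nth j x l) d = if q =? j then x else nth q l d.
Proof. revert j q; induction l; intros [|j] [|q]; simpl; intros; try lia; auto. apply IHl; lia. Qed.

Lemma nth_remove_nth {A} (j q : nat) (l : list A) d :
  nth q (remove_nth j l) d = if q <? j then nth q l d else nth (S q) l d.
Proof.
  revert j q; induction l; intros [|j] [|q]; simpl; auto.
  - destruct (S q <? S j); auto.
  - rewrite IHl. reflexivity.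
Qed.

(** * Tracking trees through the coalescent *)

(* Position, after the trees at positions a < b are joined, of the tree that was at position p. *)
Definition relabel (a b p : nat) : nat := if p =? b then a else if b <? p then pred p else p.

Lemma relabel_cases a b p :
  (p = b /\ relabel a b p = a) \/ (b < p /\ relabel a b p = pred p) \/ (p < b /\ relabel a b p = p).
Proof. unfold relabel. destruct (Nat.eqb_spec p b), (Nat.ltb_spec b p); lia. Qed.

Lemma relabel_lt a b p i : a < b < i -> p < i -> relabel a b p < pred i.
Proof. intros. destruct (relabel_cases a b p) as [[? ->]|[[? ->]|[? ->]]]; lia. Qed.

Lemma relabel_eq a b x y : a < b -> relabel a b x = relabel a b y ->
  x = y \/ (x = a /\ y = b) \/ (x = b /\ y = a).
Proof.
  intros. destruct (relabel_cases a b x) as [[? Ex]|[[? Ex]|[? Ex]]],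
    (relabel_cases a b y) as [[? Ey]|[[? Ey]|[? Ey]]]; lia.
Qed.

Definition sole_block (st : list (list nat)) (v p : nat) : Prop :=
  p < length st /\ forall q, q < length st -> (existsb (Nat.eqb v) (nth q st []) = true <-> q = p).

Lemma find_block_sole st v p : sole_block st v p -> find_block v st = p.
Proof.
  revert p; induction st as [|B t IH]; intros p [Hp H]; simpl in *; [lia|].
  destruct (existsb (Nat.eqb v) B) eqn:E.
  - assert (0 = p) by (apply (H 0); auto; lia). auto.
  - destruct p as [|p].
    + assert (HH := proj2 (H 0 ltac:(lia)) eq_refl). simpl in HH. congruence.
    + f_equal. apply IH. split; [lia|]. intros q Hq. rewrite (H (S q)); [|lia]. simpl. lia.
Qed.

Lemma merge_sole st a b v p : a < b -> b < length st -> sole_block st v p ->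
  sole_block (merge st a b) v (relabel a b p).
Proof.
  intros Hab Hb [Hp H]. unfold merge, sole_block.
  assert (Hlen : length (remove_nth b (replace_nth a (nth a st [] ++ nth b st []) st)) = pred (length st))
    by (rewrite length_remove_nth; rewrite length_replace_nth; lia).
  rewrite Hlen. split; [destruct (relabel_cases a b p) as [[? ->]|[[? ->]|[? ->]]]; lia|].
  intros q Hq. rewrite nth_remove_nth.
  destruct (Nat.ltb_spec q b); rewrite nth_replace_nth by lia.
  - destruct (Nat.eqb_spec q a) as [->|Hqa].
    + rewrite existsb_app, Bool.orb_true_iff, (H a), (H b) by lia.
      destruct (relabel_cases a b p) as [[? ->]|[[? ->]|[? ->]]]; lia.
    + rewrite (H q) by lia. destruct (relabel_cases a b p) as [[? ->]|[[? ->]|[? ->]]]; lia.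
  - destruct (Nat.eqb_spec (S q) a); [lia|].
    rewrite (H (S q)) by lia. destruct (relabel_cases a b p) as [[? ->]|[[? ->]|[? ->]]]; lia.
Qed.

Lemma in_choices i c : In c (choices i) -> exists a b x, c = (a, b, x) /\ a < b < i.
Proof.
  unfold choices. intros H. apply in_flat_map in H as [b [Hb H]].
  apply in_flat_map in H as [a [Ha H]]. apply in_seq in Hb, Ha.
  simpl in H. destruct H as [<-|[<-|[]]]; eexists _, _, _; split; eauto; lia.
Qed.

Lemma outcomes_SS i :
  outcomes (S (S i)) = flat_map (fun c => map (cons c) (outcomes (S i))) (choices (S (S i))).
Proof. reflexivity. Qed.

Lemma in_outcomes i om : In om (outcomes i) ->
  (om = [] /\ i <= 1) \/
  exists a b x rest, om = (a, b, x) :: rest /\ a < b < i /\ In rest (outcomes (pred i)).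
Proof.
  destruct i as [|[|i]]; intros H; try (destruct H as [<-|[]]; auto).
  right. rewrite outcomes_SS in H. apply in_flat_map in H as [c [Hc H]].
  apply in_map_iff in H as [r [<- Hr]].
  apply in_choices in Hc as [a [b [x [-> Hab]]]]. exists a, b, x, r. auto.
Qed.

Lemma length_outcomes om i : In om (outcomes i) -> length om = pred i.
Proof.
  revert i; induction om as [|c om IH]; intros i H;
    apply in_outcomes in H as [[? ?]|[a [b [x [rest [He [Hab Hr]]]]]]]; try discriminate; simpl.
  - lia.
  - injection He as -> ->. apply IH in Hr. lia.
Qed.

Definition hits (a b p : nat) : bool := (p =? a) || (p =? b).

Fixpoint hit_stages (i p : nat) (om : list step) : list nat :=
  match om with
  | [] => []
  | (a, b, _) :: rest =>
      (if hits a b p then [i] else []) ++ hit_stages (pred i) (relabel a b p) rest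
  end.

Lemma run_hit_stages om i st v p : In om (outcomes i) -> length st = i -> sole_block st v p ->
  run i st om v = hit_stages i p om.
Proof.
  revert i st p; induction om as [|c om IH]; intros i st p Hom Hl Hsole; simpl; auto.
  apply in_outcomes in Hom as [[? _]|[a [b [x [rest [Heq [Hab Hr]]]]]]]; [discriminate|].
  injection Heq as -> ->. rewrite (find_block_sole _ _ _ Hsole). f_equal.
  apply IH; auto.
  - unfold merge. rewrite length_remove_nth; rewrite ?length_replace_nth; lia.
  - apply merge_sole; auto; lia.
Qed.

Lemma hit_stages_le om i p m : In m (hit_stages i p om) -> m <= i.
Proof.
  revert i p; induction om as [|[[a b] x] om IH]; intros i p H; simpl in *; [tauto|].
  apply in_app_or in H as [H|H].
  - destruct (hits a b p); simpl in H; [destruct H as [<-|[]]; lia|tauto].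
  - apply IH in H. lia.
Qed.

Fixpoint hits_match (L i p : nat) (Jv : nat -> bool) (om : list step) : bool :=
  match om with
  | [] => true
  | (a, b, _) :: rest =>
      Bool.eqb (hits a b p && (L <? i)) (Jv i) && hits_match L (pred i) (relabel a b p) Jv rest
  end.

Definition stage_ok (L i : nat) (ps : list (nat * (nat -> bool))) (a b : nat) : bool :=
  forallb (fun e => Bool.eqb (hits a b (fst e) && (L <? i)) (snd e i)) ps.

Definition relabel_all (a b : nat) (ps : list (nat * (nat -> bool))) : list (nat * (nat -> bool)) :=
  map (fun e => (relabel a b (fst e), snd e)) ps.

Fixpoint all_hits_match (L i : nat) (ps : list (nat * (nat -> bool))) (om : list step) : bool :=
  match om with
  | [] => true
  | (a, b, _) :: rest => stage_ok L i ps a b && all_hits_match L (pred i) (relabel_all a b ps) rest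
  end.

Lemma forallb_ext_in {A} (f g : A -> bool) l :
  (forall x, In x l -> f x = g x) -> forallb f l = forallb g l.
Proof. induction l; simpl; intros H; auto. rewrite H, IHl; auto. Qed.

Lemma forallb_andb {A} (f g : A -> bool) l :
  forallb (fun x => f x && g x) l = forallb f l && forallb g l.
Proof.
  induction l as [|x l IH]; simpl; auto.
  rewrite IH. destruct (f x), (g x), (forallb f l), (forallb g l); reflexivity.
Qed.

Lemma hits_match_stages L om i p Jv : length om = pred i -> (forall m, m <= 1 -> Jv m = false) ->
  forallb (fun m => Bool.eqb (existsb (Nat.eqb m) (hit_stages i p om) && (L <? m)) (Jv m)) (seq 0 (S i))
  = hits_match L i p Jv om.
Proof.
  revert i p; induction om as [|[[a b] x] om IH]; intros i p Hl HJ.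
  - apply forallb_forall. intros m Hm. apply in_seq in Hm. simpl in *. rewrite HJ by lia. reflexivity.
  - destruct i as [|i]; simpl in Hl; [discriminate|].
    rewrite seq_S, forallb_app. cbn [hit_stages hits_match pred forallb Nat.add].
    rewrite <- (IH i (relabel a b p)) by (auto; destruct i; simpl in *; lia).
    rewrite andb_true_r, andb_comm. f_equal.
    + assert (Hnew : existsb (Nat.eqb (S i)) (hit_stages i (relabel a b p) om) = false).
      { apply not_true_iff_false. intros E.
        apply existsb_exists in E as [m [Hm Em]]. apply Nat.eqb_eq in Em as <-.
        apply hit_stages_le in Hm. lia. }
      rewrite existsb_app, Hnew, orb_false_r.
      destruct (hits a b p); simpl; rewrite ?Nat.eqb_refl; reflexivity.
    + apply forallb_ext_in. intros m Hm. apply in_seq in Hm. rewrite existsb_app.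
      destruct (hits a b p); simpl; auto.
      destruct (Nat.eqb_spec m (S i)); [lia|]. reflexivity.
Qed.

Lemma forallb_hits_match L om i ps :
  forallb (fun e => hits_match L i (fst e) (snd e) om) ps = all_hits_match L i ps om.
Proof.
  revert i ps; induction om as [|[[a b] x] om IH]; intros i ps; simpl.
  - apply forallb_forall; auto.
  - rewrite <- IH, forallb_andb. unfold stage_ok, relabel_all. f_equal. clear IH.
    induction ps as [|e ps IHps]; simpl; auto. rewrite IHps. reflexivity.
Qed.

Lemma sole_block_initial n v : 1 <= v <= n -> sole_block (map (fun j => [j]) (seq 1 n)) v (v - 1).
Proof.
  intros Hv. unfold sole_block. rewrite length_map, length_seq. split; [lia|].
  intros q Hq. rewrite nth_indep with (d' := [0]) by (rewrite length_map, length_seq; lia).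
  rewrite (map_nth (fun j => [j]) (seq 1 n) 0 q), seq_nth by lia.
  simpl. rewrite orb_false_r, Nat.eqb_eq. lia.
Qed.

Lemma S1_eq_hits_match n om v Jv : In om (outcomes n) -> 1 <= v <= n ->
  (forall m, m <= 1 -> Jv m = false) ->
  S1_eq n om v Jv = hits_match (Lcut n) n (v - 1) Jv om.
Proof.
  intros Hom Hv HJ. unfold S1_eq, S_n.
  rewrite (run_hit_stages om n _ v (v - 1)); auto.
  - apply hits_match_stages; auto. apply length_outcomes; auto.
  - rewrite length_map, length_seq; auto.
  - apply sole_block_initial; auto.
Qed.

(** * Counting the outcomes of an event *)

Fixpoint choose2 (c : nat) : nat := match c with 0 => 0 | S c' => choose2 c' + c' end.

Definition count_below (i : nat) (h : nat -> bool) : nat := length (filter h (seq 0 i)).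

Fixpoint count_pairs (i : nat) (f : nat -> nat -> bool) : nat :=
  match i with 0 => 0 | S i' => count_pairs i' f + count_below i' (fun a => f a i') end.

Lemma count_below_S i h : count_below (S i) h = count_below i h + (if h i then 1 else 0).
Proof.
  unfold count_below. rewrite seq_S, filter_app, length_app. simpl. destruct (h i); reflexivity.
Qed.

Lemma count_below_ext i h1 h2 : (forall a, a < i -> h1 a = h2 a) -> count_below i h1 = count_below i h2.
Proof. induction i; intros H; auto. rewrite !count_below_S, IHi, H by (auto; lia). reflexivity. Qed.

Lemma count_below_false i : count_below i (fun _ => false) = 0.
Proof. induction i; auto. rewrite count_below_S; lia. Qed.

Lemma count_below_pos i h p : p < i -> h p = true -> 1 <= count_below i h.
Proof.
  induction i; intros Hp Hh; [lia|]. rewrite count_below_S.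
  destruct (Nat.eqb_spec i p) as [->|]; [rewrite Hh; lia|]. specialize (IHi ltac:(lia) Hh). lia.
Qed.

Lemma count_below_witness i h : 0 < count_below i h -> exists m, m < i /\ h m = true.
Proof.
  induction i; intros H; [unfold count_below in H; simpl in H; lia|].
  rewrite count_below_S in H. destruct (h i) eqn:E.
  - exists i; split; [lia|auto].
  - destruct IHi as [m [? ?]]; [lia|]. exists m; split; auto.
Qed.

Lemma count_below_orb i a b : count_below i (fun x => a x || b x) <= count_below i a + count_below i b.
Proof. induction i; auto. rewrite !count_below_S. destruct (a i), (b i); simpl; lia. Qed.

Lemma count_below_negb i h : count_below i h + count_below i (fun x => negb (h x)) = i.
Proof. induction i; auto. rewrite !count_below_S. destruct (h i); simpl; lia. Qed.

Lemma count_below_eqb i p c :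
  count_below i (fun a => (a =? p) && c) = if (p <? i) && c then 1 else 0.
Proof.
  induction i as [|i IH]; simpl; [destruct c; auto|]. rewrite count_below_S, IH.
  destruct (Nat.eqb_spec i p), (Nat.ltb_spec p i), (Nat.ltb_spec p (S i)), c; simpl; lia.
Qed.

Definition avoids (P : list nat) (x : nat) : bool := negb (existsb (Nat.eqb x) P).

Lemma avoids_app P1 P2 x : avoids (P1 ++ P2) x = avoids P1 x && avoids P2 x.
Proof. unfold avoids. rewrite existsb_app. destruct (existsb _ P1), (existsb _ P2); reflexivity. Qed.

Lemma count_below_in i P : NoDup P -> (forall x, In x P -> x < i) ->
  count_below i (fun x => existsb (Nat.eqb x) P) = length P.
Proof.
  intros HN HP. unfold count_below. apply Nat.le_antisymm.
  - apply NoDup_incl_length; [apply NoDup_filter, seq_NoDup|].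
    intros x Hx. apply filter_In in Hx as [_ Hx]. apply existsb_exists in Hx as [y [Hy E]].
    apply Nat.eqb_eq in E; subst; auto.
  - apply NoDup_incl_length; auto. intros x Hx. apply filter_In. split.
    + apply in_seq. specialize (HP x Hx). lia.
    + apply existsb_exists. exists x. split; auto. apply Nat.eqb_refl.
Qed.

Lemma count_below_avoids i P : NoDup P -> (forall x, In x P -> x < i) ->
  count_below i (avoids P) = i - length P.
Proof.
  intros HN HP. pose proof (count_below_negb i (fun x => existsb (Nat.eqb x) P)) as H.
  rewrite count_below_in in H; auto. unfold avoids. lia.
Qed.

Lemma count_pairs_ext i f1 f2 : (forall a b, a < b < i -> f1 a b = f2 a b) ->
  count_pairs i f1 = count_pairs i f2.
Proof.
  induction i; intros H; simpl; auto. rewrite IHi by (intros; apply H; lia).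
  f_equal. apply count_below_ext. intros; apply H; lia.
Qed.

Lemma count_pairs_both i o : count_pairs i (fun a b => o a && o b) = choose2 (count_below i o).
Proof.
  induction i; simpl; auto. rewrite IHi, count_below_S.
  rewrite (count_below_ext i (fun a => o a && o i) (fun a => if o i then o a else false))
    by (intros; destruct (o a), (o i); auto).
  destruct (o i).
  - rewrite Nat.add_1_r. reflexivity.
  - rewrite count_below_false, !Nat.add_0_r. reflexivity.
Qed.

Lemma count_pairs_one i o p : o p = true -> p < i ->
  count_pairs i (fun a b => ((a =? p) || (b =? p)) && o a && o b) = count_below i o - 1.
Proof.
  intros Hp. induction i; [lia|]. intros Hpi. simpl.
  destruct (Nat.eqb_spec i p) as [->|Hip].
  - rewrite (count_pairs_ext p _ (fun _ _ => false && false)), count_pairs_both, count_below_false.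
    + rewrite (count_below_ext p (fun a => ((a =? p) || true) && o a && o p) o)
        by (intros; rewrite orb_true_r, Hp, andb_true_r; reflexivity).
      rewrite count_below_S, Hp. simpl. lia.
    + intros a b Hab. destruct (Nat.eqb_spec a p), (Nat.eqb_spec b p); simpl; auto; lia.
  - rewrite IHi by lia.
    rewrite (count_below_ext i (fun a => ((a =? p) || false) && o a && o i) (fun a => (a =? p) && o i)).
    2:{ intros a Ha. rewrite orb_false_r.
        destruct (Nat.eqb_spec a p) as [->|]; simpl; auto. rewrite Hp. auto. }
    rewrite count_below_eqb, count_below_S.
    pose proof (count_below_pos i o p ltac:(lia) Hp).
    destruct (Nat.ltb_spec p i); [|lia]. destruct (o i); simpl; lia.
Qed.

Lemma choices_S i :
  choices (S i) = choices i ++ flat_map (fun a => [(a, i, true); (a, i, false)]) (seq 0 i).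
Proof. unfold choices. rewrite seq_S, flat_map_app. simpl. rewrite app_nil_r. reflexivity. Qed.

Lemma length_filter_choices (H : step -> bool) i :
  (forall a b, H (a, b, true) = H (a, b, false)) ->
  length (filter H (choices i)) = 2 * count_pairs i (fun a b => H (a, b, true)).
Proof.
  intros Hx. induction i; simpl; auto.
  rewrite choices_S, filter_app, length_app, IHi. unfold count_below.
  enough (length (filter H (flat_map (fun a => [(a, i, true); (a, i, false)]) (seq 0 i)))
          = 2 * length (filter (fun a => H (a, i, true)) (seq 0 i))) by lia.
  induction (seq 0 i) as [|a l IHl]; simpl; auto.
  rewrite <- Hx. destruct (H (a, i, true)); simpl; lia.
Qed.

Definition compatible_pairs (L K : nat) (U : nat -> bool) (i : nat) : nat :=
  if i <=? L then choose2 i else if U i then i - K else choose2 (i - K).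

(* The factor 2 is the direction bit, which no event considered here depends on. *)
Fixpoint compatible_outcomes (L K : nat) (U : nat -> bool) (i : nat) : nat :=
  match i with
  | 0 => 1
  | S i' => match i' with 0 => 1 | _ => 2 * compatible_pairs L K U i * compatible_outcomes L K U i' end
  end.

Lemma compatible_outcomes_ext L K U1 U2 i : (forall m, U1 m = U2 m) ->
  compatible_outcomes L K U1 i = compatible_outcomes L K U2 i.
Proof.
  intros H. induction i as [|[|i] IH]; auto.
  simpl in *. rewrite IH. unfold compatible_pairs. rewrite H. reflexivity.
Qed.

Definition tracked_stages (ps : list (nat * (nat -> bool))) (m : nat) : bool :=
  existsb (fun e => snd e m) ps.

(* Below the cut the tracked trees may already have merged, so distinct positions are
   only required above it. *)
Definition admissible (L i : nat) (ps : list (nat * (nat -> bool))) : Prop :=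
  (L < i -> NoDup (map fst ps)) /\ (forall e, In e ps -> fst e < i) /\
  (forall e, In e ps -> forall m, m <= L -> snd e m = false) /\
  (forall e1 e2, In e1 ps -> In e2 ps -> forall m, snd e1 m = true -> snd e2 m = true -> fst e1 = fst e2).

Lemma stage_ok_below L i ps a b : i <= L -> (forall e, In e ps -> forall m, m <= L -> snd e m = false) ->
  stage_ok L i ps a b = true.
Proof.
  intros Hi HL. apply forallb_forall. intros e He.
  rewrite HL by auto. destruct (Nat.ltb_spec L i); [lia|]. rewrite andb_false_r. reflexivity.
Qed.

Lemma stage_ok_untracked L i ps a b : L < i -> (forall e, In e ps -> snd e i = false) ->
  stage_ok L i ps a b = avoids (map fst ps) a && avoids (map fst ps) b.
Proof.
  intros Hi. unfold stage_ok. destruct (Nat.ltb_spec L i); [|lia].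
  induction ps as [|e ps IH]; intros Hnone; simpl; auto.
  rewrite IH by (intros; apply Hnone; simpl; auto). rewrite Hnone by (simpl; auto).
  unfold avoids, hits. simpl. rewrite (Nat.eqb_sym a (fst e)), (Nat.eqb_sym b (fst e)).
  destruct (fst e =? a), (fst e =? b), (existsb (Nat.eqb a) (map fst ps)),
    (existsb (Nat.eqb b) (map fst ps));
    reflexivity.
Qed.

Lemma count_stage_ok_untracked L i ps : L < i -> NoDup (map fst ps) -> (forall e, In e ps -> fst e < i) ->
  (forall e, In e ps -> snd e i = false) ->
  count_pairs i (stage_ok L i ps) = choose2 (i - length ps).
Proof.
  intros Hi HN Hlt Hnone.
  rewrite (count_pairs_ext _ _ (fun a b => avoids (map fst ps) a && avoids (map fst ps) b))
    by (intros; apply stage_ok_untracked; auto).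
  rewrite count_pairs_both, count_below_avoids, length_map; auto.
  intros y Hy. apply in_map_iff in Hy as [e [<- He]]. auto.
Qed.

Lemma count_stage_ok_tracked L i ps1 e0 ps2 : L < i -> NoDup (map fst (ps1 ++ e0 :: ps2)) ->
  (forall e, In e (ps1 ++ e0 :: ps2) -> fst e < i) -> snd e0 i = true ->
  (forall e, In e (ps1 ++ ps2) -> snd e i = false) ->
  count_pairs i (stage_ok L i (ps1 ++ e0 :: ps2)) = i - length (ps1 ++ e0 :: ps2).
Proof.
  intros Hi HN Hlt He0 Hothers.
  set (P := map fst (ps1 ++ ps2)).
  rewrite map_app in HN. simpl in HN.
  assert (HNP : NoDup P) by (unfold P; rewrite map_app; eapply NoDup_remove_1; eauto).
  assert (He0P : avoids P (fst e0) = true).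
  { unfold avoids. apply negb_true_iff, not_true_iff_false. intros E.
    apply existsb_exists in E as [y [Hy Ey]]. apply Nat.eqb_eq in Ey as <-.
    apply NoDup_remove_2 in HN. apply HN. rewrite <- map_app. auto. }
  rewrite (count_pairs_ext _ _ (fun a b => ((a =? fst e0) || (b =? fst e0)) && avoids P a && avoids P b)).
  - rewrite count_pairs_one, count_below_avoids; auto.
    + unfold P. rewrite !length_app, length_map, length_app. simpl. lia.
    + intros y Hy. unfold P in Hy. apply in_map_iff in Hy as [e [<- He]].
      apply Hlt. apply in_app_or in He as [?|?]; apply in_or_app; simpl; auto.
    + apply Hlt, in_or_app; simpl; auto.
  - intros a b _. unfold stage_ok. rewrite forallb_app. simpl.
    fold (stage_ok L i ps1 a b) (stage_ok L i ps2 a b).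
    rewrite !stage_ok_untracked by (auto; intros; apply Hothers, in_or_app; auto).
    rewrite He0. destruct (Nat.ltb_spec L i); [|lia].
    unfold P. rewrite map_app, !avoids_app. unfold hits.
    rewrite (Nat.eqb_sym (fst e0) a), (Nat.eqb_sym (fst e0) b).
    destruct (avoids (map fst ps1) a), (avoids (map fst ps1) b), (avoids (map fst ps2) a),
      (avoids (map fst ps2) b), (a =? fst e0), (b =? fst e0); reflexivity.
Qed.

Lemma count_stage_ok L i ps : admissible L i ps ->
  count_pairs i (stage_ok L i ps) = compatible_pairs L (length ps) (tracked_stages ps) i.
Proof.
  intros [HN [Hlt [HL HD]]]. unfold compatible_pairs.
  destruct (Nat.leb_spec i L).
  - rewrite (count_pairs_ext _ _ (fun a b => true && true)) by (intros; apply stage_ok_below; auto).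
    rewrite count_pairs_both. unfold count_below. rewrite filter_true, length_seq. reflexivity.
  - specialize (HN ltac:(lia)). destruct (tracked_stages ps i) eqn:EU.
    + apply existsb_exists in EU as [e0 [He0 E0]].
      destruct (in_split _ _ He0) as [ps1 [ps2 ->]].
      apply count_stage_ok_tracked; auto.
      intros e He. apply not_true_iff_false. intros Ee.
      assert (Hin : In e (ps1 ++ e0 :: ps2))
        by (apply in_app_or in He as [?|?]; apply in_or_app; simpl; auto).
      rewrite map_app in HN. simpl in HN. apply NoDup_remove_2 in HN. apply HN.
      rewrite <- map_app, <- (HD _ _ Hin He0 _ Ee E0). apply in_map; auto.
    + apply count_stage_ok_untracked; auto.
      intros e He. apply not_true_iff_false. intros Ee.
      assert (tracked_stages ps i = true) by (apply existsb_exists; eauto). congruence.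
Qed.

Lemma tracked_stages_relabel_all a b ps m : tracked_stages (relabel_all a b ps) m = tracked_stages ps m.
Proof. unfold tracked_stages, relabel_all. induction ps; simpl; auto. rewrite IHps. reflexivity. Qed.

Lemma admissible_relabel_all L i ps a b : a < b < S i -> admissible L (S i) ps ->
  stage_ok L (S i) ps a b = true ->
  admissible L i (relabel_all a b ps).
Proof.
  intros Hab [HN [Hlt [HL HD]]] Hok. unfold relabel_all.
  assert (Hhit : forall e, In e ps -> snd e (S i) = hits a b (fst e) && (L <? S i)).
  { intros e He. unfold stage_ok in Hok. rewrite forallb_forall in Hok.
    symmetry. apply eqb_prop, Hok, He. }
  split; [|split; [|split]].
  - intros HLi. rewrite map_map. simpl. rewrite <- (map_map fst (relabel a b)).
    apply NoDup_map_NoDup_ForallPairs; [|apply HN; lia].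
    intros y z Hy Hz E. apply in_map_iff in Hy as [e1 [<- He1]]. apply in_map_iff in Hz as [e2 [<- He2]].
    apply relabel_eq in E; [|lia].
    destruct E as [E|[[E1 E2]|[E1 E2]]]; auto;
      apply (HD e1 e2 He1 He2 (S i)); rewrite Hhit by auto; unfold hits;
      rewrite ?E1, ?E2, !Nat.eqb_refl, ?orb_true_r; destruct (Nat.ltb_spec L (S i)); auto; lia.
  - intros e He. apply in_map_iff in He as [e1 [<- He1]]. apply (relabel_lt a b _ (S i)); auto; lia.
  - intros e He m Hm. apply in_map_iff in He as [e1 [<- He1]]. apply (HL e1); auto.
  - intros e1 e2 He1 He2 m H1 H2. apply in_map_iff in He1 as [f1 [<- Hf1]].
    apply in_map_iff in He2 as [f2 [<- Hf2]]. simpl in *. f_equal. apply (HD _ _ Hf1 Hf2 m); auto.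
Qed.

Lemma length_filter_flat_map {A B} (f : B -> bool) (h : A -> list B) l :
  length (filter f (flat_map h l)) = list_sum (map (fun x => length (filter f (h x))) l).
Proof. induction l; simpl; auto. rewrite filter_app, length_app, IHl. reflexivity. Qed.

Lemma length_filter_map_cons (f : list step -> bool) c O :
  length (filter f (map (cons c) O)) = length (filter (fun r => f (c :: r)) O).
Proof. induction O; simpl; auto. destruct (f (c :: a)); simpl; auto. Qed.

Lemma list_sum_filter_const {A} (H : A -> bool) (X : A -> nat) Y l :
  (forall c, In c l -> H c = true -> X c = Y) ->
  list_sum (map (fun c => if H c then X c else 0) l) = length (filter H l) * Y.
Proof.
  induction l; intros HX; simpl; auto. rewrite IHl by (intros; apply HX; simpl; auto).
  destruct (H a) eqn:E; simpl; auto. rewrite HX; simpl; auto.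
Qed.

(* The number of compatible choices at each stage depends on the tracked pairs only through
   their number and the union of their stage sets, hence the product formula. *)
Theorem length_filter_all_hits_match L i ps : admissible L i ps ->
  length (filter (all_hits_match L i ps) (outcomes i))
  = compatible_outcomes L (length ps) (tracked_stages ps) i.
Proof.
  revert ps; induction i as [|[|j] IH]; intros ps Hadm; [reflexivity|reflexivity|].
  rewrite outcomes_SS, length_filter_flat_map.
  erewrite map_ext_in.
  2:{ intros [[a b] x] _. rewrite length_filter_map_cons.
      instantiate (1 := fun c : step =>
        if (let '(a, b, _) := c in stage_ok L (S (S j)) ps a b)
        then length (filter (all_hits_match L (S j) (let '(a, b, _) := c in relabel_all a b ps))
                       (outcomes (S j)))
        else 0).
      set (O := outcomes (S j)). clearbody O. simpl.
      destruct (stage_ok L (S (S j)) ps a b); [reflexivity|].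
      induction O; simpl; auto. }
  rewrite (list_sum_filter_const (fun c : step => let '(a, b, _) := c in stage_ok L (S (S j)) ps a b)
             _ (compatible_outcomes L (length ps) (tracked_stages ps) (S j))).
  - rewrite length_filter_choices, count_stage_ok by auto. reflexivity.
  - intros [[a b] x] Hc Hok. apply in_choices in Hc as [a' [b' [x' [[= <- <- <-] Hab]]]].
    rewrite IH.
    + unfold relabel_all. rewrite length_map.
      apply compatible_outcomes_ext, tracked_stages_relabel_all.
    + apply admissible_relabel_all; auto.
Qed.

(** * Probabilities as products of stage ratios *)

Open Scope R_scope.

Definition prodR (f : nat -> R) (l : list nat) : R := fold_right Rmult 1 (map f l).

Lemma prodR_cons f i l : prodR f (i :: l) = f i * prodR f l.
Proof. reflexivity. Qed.

Lemma prodR_app f l1 l2 : prodR f (l1 ++ l2) = prodR f l1 * prodR f l2.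
Proof. unfold prodR. induction l1; simpl; [ring|]. rewrite IHl1. ring. Qed.

Lemma prodR_ext_in f g l : (forall x, In x l -> f x = g x) -> prodR f l = prodR g l.
Proof. intros H. unfold prodR. rewrite (map_ext_in f g l H). reflexivity. Qed.

Lemma prodR_mult f g l : prodR (fun x => f x * g x) l = prodR f l * prodR g l.
Proof. unfold prodR. induction l; simpl; [ring|]. rewrite IHl. ring. Qed.

Lemma prodR_const1 l : prodR (fun _ => 1) l = 1.
Proof. unfold prodR. induction l; simpl; [reflexivity|]. rewrite IHl. ring. Qed.

Lemma prodR_exchange (h : nat -> nat -> R) l1 l2 :
  prodR (fun x => prodR (h x) l2) l1 = prodR (fun y => prodR (fun x => h x y) l1) l2.
Proof.
  induction l1 as [|x l1 IH].
  - symmetry. exact (prodR_const1 l2).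
  - rewrite prodR_cons, IH, <- prodR_mult. reflexivity.
Qed.

Lemma prodR_nonneg f l : (forall x, In x l -> 0 <= f x) -> 0 <= prodR f l.
Proof.
  unfold prodR. induction l; simpl; intros H; [lra|].
  apply Rmult_le_pos; auto.
Qed.

Definition stage_ratio (L K : nat) (U : nat -> bool) (i : nat) : R :=
  INR (compatible_pairs L K U i) / INR (choose2 i).

Lemma INR_choose2 c : INR (choose2 c) = INR c * (INR c - 1) / 2.
Proof. induction c; simpl choose2; [simpl; lra|]. rewrite plus_INR, IHc, S_INR. field. Qed.

Lemma choose2_pos c : (2 <= c)%nat -> (1 <= choose2 c)%nat.
Proof. intros. destruct c as [|[|c]]; try lia. simpl. lia. Qed.

Lemma compatible_pairs_untracked L i : compatible_pairs L 0 (fun _ => false) i = choose2 i.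
Proof. unfold compatible_pairs. destruct (i <=? L)%nat; auto. rewrite Nat.sub_0_r; auto. Qed.

Lemma compatible_outcomes_pos L i : (1 <= compatible_outcomes L 0 (fun _ => false) i)%nat.
Proof.
  induction i as [|[|i] IH]; simpl; auto.
  change (1 <= 2 * compatible_pairs L 0 (fun _ => false) (S (S i))
                 * compatible_outcomes L 0 (fun _ => false) (S i))%nat.
  rewrite compatible_pairs_untracked. pose proof (choose2_pos (S (S i)) ltac:(lia)). nia.
Qed.

Lemma compatible_outcomes_ratio L K U n :
  INR (compatible_outcomes L K U n) / INR (compatible_outcomes L 0 (fun _ => false) n)
  = prodR (stage_ratio L K U) (seq 2 (pred n)).
Proof.
  induction n as [|[|j] IH]; [unfold prodR; simpl; field|unfold prodR; simpl; field|].
  replace (seq 2 (pred (S (S j)))) with (seq 2 (pred (S j)) ++ [S (S j)])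
    by exact (eq_sym (seq_S j 2)).
  rewrite prodR_app, <- IH.
  change (prodR (stage_ratio L K U) [S (S j)]) with (stage_ratio L K U (S (S j)) * 1). unfold stage_ratio.
  change (compatible_outcomes L K U (S (S j)))
    with (2 * compatible_pairs L K U (S (S j)) * compatible_outcomes L K U (S j))%nat.
  change (compatible_outcomes L 0 (fun _ => false) (S (S j)))
    with (2 * compatible_pairs L 0 (fun _ => false) (S (S j))
          * compatible_outcomes L 0 (fun _ => false) (S j))%nat.
  rewrite compatible_pairs_untracked, !mult_INR.
  pose proof (compatible_outcomes_pos L (S j)). pose proof (choose2_pos (S (S j)) ltac:(lia)).
  field. repeat split; apply not_0_INR; lia.
Qed.

Lemma stage_ratio_ext L K U1 U2 i : (forall m, U1 m = U2 m) -> stage_ratio L K U1 i = stage_ratio L K U2 i.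
Proof. intros H. unfold stage_ratio, compatible_pairs. rewrite H. reflexivity. Qed.

Lemma stage_ratio_below L K U i : (2 <= i <= L)%nat -> stage_ratio L K U i = 1.
Proof.
  intros Hi. unfold stage_ratio, compatible_pairs. destruct (Nat.leb_spec i L); [|lia].
  pose proof (choose2_pos i ltac:(lia)). field. apply not_0_INR. lia.
Qed.

Lemma prodR_stage_ratio_cut L K U n : (1 <= L <= n)%nat ->
  prodR (stage_ratio L K U) (seq 2 (pred n)) = prodR (stage_ratio L K U) (seq (S L) (n - L)).
Proof.
  intros HL. replace (pred n) with (pred L + (n - L))%nat by lia.
  rewrite seq_app, prodR_app. replace (2 + pred L)%nat with (S L) by lia.
  rewrite (prodR_ext_in _ (fun _ => 1)), prodR_const1; [ring|].
  intros i Hi. apply in_seq in Hi. apply stage_ratio_below. lia.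
Qed.

Lemma all_hits_match_nil L i om : all_hits_match L i [] om = true.
Proof. revert i; induction om as [|[[a b] x] om IH]; intros; simpl; auto. Qed.

Lemma prob_coal_all_hits_match n ps : (1 <= Lcut n <= n)%nat -> admissible (Lcut n) n ps ->
  prob_coal n (all_hits_match (Lcut n) n ps)
  = prodR (stage_ratio (Lcut n) (length ps) (tracked_stages ps)) (seq (S (Lcut n)) (n - Lcut n)).
Proof.
  intros HL Hadm. unfold prob_coal.
  assert (Htotal : length (outcomes n) = length (filter (all_hits_match (Lcut n) n []) (outcomes n))).
  { rewrite (filter_ext_in _ (fun _ => true)) by (intros; apply all_hits_match_nil).
    rewrite filter_true. reflexivity. }
  rewrite Htotal, !length_filter_all_hits_match; auto.
  - apply (eq_trans (compatible_outcomes_ratio _ _ _ _)), prodR_stage_ratio_cut; auto.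
  - repeat split; simpl; intros; try tauto. constructor.
Qed.

Lemma prob_coal_ext_in n ev1 ev2 : (forall om, In om (outcomes n) -> ev1 om = ev2 om) ->
  prob_coal n ev1 = prob_coal n ev2.
Proof. intros H. unfold prob_coal. rewrite (filter_ext_in _ _ _ H). reflexivity. Qed.

Lemma forallb_map {A B} (f : B -> bool) (h : A -> B) l : forallb f (map h l) = forallb (fun x => f (h x)) l.
Proof. induction l; simpl; auto. rewrite IHl; auto. Qed.

Definition tracked_list (k : nat) (J : nat -> nat -> bool) : list (nat * (nat -> bool)) :=
  map (fun v => ((v - 1)%nat, J v)) (seq 1 k).

Definition union_stages (k : nat) (J : nat -> nat -> bool) (m : nat) : bool :=
  existsb (fun v => J v m) (seq 1 k).

Lemma tracked_stages_tracked_list k J m : tracked_stages (tracked_list k J) m = union_stages k J m.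
Proof. unfold tracked_stages, tracked_list, union_stages. induction (seq 1 k); simpl; auto. rewrite IHl; auto. Qed.

Lemma admissible_tracked_list n k J : (k <= n)%nat ->
  (forall v, (1 <= v <= k)%nat -> forall m, J v m = true -> (Lcut n < m)%nat) ->
  (forall v w, (1 <= v <= k)%nat -> (1 <= w <= k)%nat -> v <> w ->
     forall m, J v m = true -> J w m = false) ->
  admissible (Lcut n) n (tracked_list k J).
Proof.
  intros Hkn Hsupp Hdisj. unfold admissible, tracked_list. split; [|split; [|split]].
  - intros _. rewrite map_map. simpl. rewrite <- seq_shift, map_map.
    rewrite (map_ext _ (fun x => x)) by (intros; lia). rewrite map_id. apply seq_NoDup.
  - intros e He. apply in_map_iff in He as [v [<- Hv]]. apply in_seq in Hv. simpl. lia.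
  - intros e He m Hm. apply in_map_iff in He as [v [<- Hv]]. apply in_seq in Hv. simpl.
    apply not_true_iff_false. intros E. specialize (Hsupp v ltac:(lia) m E). lia.
  - intros e1 e2 He1 He2 m H1 H2. apply in_map_iff in He1 as [v [<- Hv]].
    apply in_map_iff in He2 as [w [<- Hw]]. apply in_seq in Hv, Hw. simpl in *.
    destruct (Nat.eq_dec v w) as [->|Hvw]; auto.
    rewrite (Hdisj v w ltac:(lia) ltac:(lia) Hvw m H1) in H2. discriminate.
Qed.

Lemma probS_product n k J : (k <= n)%nat -> (1 <= Lcut n <= n)%nat ->
  (forall v, (1 <= v <= k)%nat -> forall m, J v m = true -> (Lcut n < m)%nat) ->
  (forall v w, (1 <= v <= k)%nat -> (1 <= w <= k)%nat -> v <> w ->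
     forall m, J v m = true -> J w m = false) ->
  probS n k J = prodR (stage_ratio (Lcut n) k (union_stages k J)) (seq (S (Lcut n)) (n - Lcut n)).
Proof.
  intros Hkn HL Hsupp Hdisj. unfold probS.
  rewrite (prob_coal_ext_in n _ (all_hits_match (Lcut n) n (tracked_list k J))).
  - rewrite prob_coal_all_hits_match; auto.
    + unfold tracked_list at 1. rewrite length_map, length_seq.
      apply prodR_ext_in. intros i _. apply stage_ratio_ext, tracked_stages_tracked_list.
    + apply admissible_tracked_list; auto.
  - intros om Hom. rewrite <- forallb_hits_match. unfold tracked_list. rewrite forallb_map.
    apply forallb_ext_in. intros v Hv. apply in_seq in Hv. apply S1_eq_hits_match; auto; [lia|].
    intros m Hm. apply not_true_iff_false. intros E. specialize (Hsupp v ltac:(lia) m E). lia.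
Qed.

Lemma probR_product n k J : (1 <= Lcut n <= n)%nat ->
  (forall v, (1 <= v <= k)%nat -> forall m, J v m = true -> (Lcut n < m)%nat) ->
  probR n k J = prodR (fun i => prodR (fun v => stage_ratio (Lcut n) 1 (J v) i) (seq 1 k))
                      (seq (S (Lcut n)) (n - Lcut n)).
Proof.
  intros HL Hsupp. rewrite <- prodR_exchange.
  apply prodR_ext_in. intros v Hv. apply in_seq in Hv.
  rewrite (prob_coal_ext_in n _ (all_hits_match (Lcut n) n [(0%nat, J v)])).
  - rewrite prob_coal_all_hits_match; auto.
    + apply prodR_ext_in. intros i _. apply stage_ratio_ext. intros m. simpl. apply orb_false_r.
    + repeat split; simpl.
      * constructor; auto. constructor.
      * intros e [<-|[]]. simpl. lia.
      * intros e [<-|[]] m Hm. simpl. apply not_true_iff_false. intros E.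
        specialize (Hsupp v ltac:(lia) m E). lia.
      * intros e1 e2 [<-|[]] [<-|[]]; auto.
  - intros om Hom. rewrite <- forallb_hits_match. simpl. rewrite andb_true_r.
    apply S1_eq_hits_match; auto; [lia|].
    intros m Hm. apply not_true_iff_false. intros E. specialize (Hsupp v ltac:(lia) m E). lia.
Qed.

(** * Stage-wise comparison *)

Lemma exp_le_exp x y : x <= y -> exp x <= exp y.
Proof. intros [H|H]; [left; apply exp_increasing; auto|subst; lra]. Qed.

Lemma Rdiv_le_cross a b c d : 0 < b -> 0 < d -> a * d <= c * b -> a / b <= c / d.
Proof.
  intros Hb Hd H. unfold Rdiv.
  replace (a * / b) with ((a * d) * / (b * d)) by (field; lra).
  replace (c * / d) with ((c * b) * / (b * d)) by (field; lra).
  apply Rmult_le_compat_r; auto. apply Rlt_le, Rinv_0_lt_compat, Rmult_lt_0_compat; auto.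
Qed.

Lemma exp_pow x n : exp x ^ n = exp (INR n * x).
Proof.
  induction n; simpl.
  - rewrite Rmult_0_l, exp_0; auto.
  - rewrite IHn, <- exp_plus. f_equal. destruct n; simpl; lra.
Qed.

Lemma untouched_ge_exp I : 2 < I -> exp (- (2 / (I - 2))) <= (I - 2) / I.
Proof.
  intros HI. pose proof (exp_ineq1_le (2 / (I - 2))) as H.
  rewrite exp_Ropp. replace ((I - 2) / I) with (/ (1 + 2 / (I - 2))) by (field; lra).
  apply Rinv_le_contravar; auto.
  assert (0 < 2 / (I-2)) by (apply Rdiv_lt_0_compat; lra). lra.
Qed.

Lemma pow_untouched_ge_exp I n : 2 < I -> exp (- (INR n * (2 / (I - 2)))) <= ((I - 2) / I) ^ n.
Proof.
  intros HI. replace (- (INR n * (2 / (I - 2)))) with (INR n * (- (2 / (I - 2)))) by ring.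
  rewrite <- exp_pow. apply pow_incr. split; [apply Rlt_le, exp_pos|]. apply untouched_ge_exp; auto.
Qed.

Lemma pow_untouched_bounds I n : 2 < I -> 0 <= ((I - 2) / I) ^ n <= 1.
Proof.
  intros HI. split. - apply pow_le. apply Rlt_le, Rdiv_lt_0_compat; lra.
  - rewrite <- (pow1 n). apply pow_incr. split; [apply Rlt_le, Rdiv_lt_0_compat; lra|].
    apply (Rmult_le_reg_r I); [lra|]. unfold Rdiv. rewrite Rmult_assoc, Rinv_l by lra. lra.
Qed.

Lemma pow_untouched_le I n : 2 < I -> ((I - 2) / I) ^ n <= (I - 2) / (I - 2 + 2 * INR n).
Proof.
  intros HI. assert (0 <= INR n) by apply pos_INR.
  replace ((I - 2) / I) with (/ (1 + 2 / (I - 2))) by (field; lra).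
  rewrite pow_inv.
  replace ((I - 2) / (I - 2 + 2 * INR n)) with (/ (1 + INR n * (2 / (I - 2)))) by (field; lra).
  apply Rinv_le_contravar.
  - assert (0 <= INR n * (2 / (I - 2)))
      by (apply Rmult_le_pos; auto; apply Rlt_le, Rdiv_lt_0_compat; lra).
    lra.
  - apply poly. apply Rdiv_lt_0_compat; lra.
Qed.

(* At a stage where exactly one of k tracked trees is hit: the product of the k one-tree
   stage ratios is 2/I ((I-2)/I)^(k-1), the joint stage ratio is (I-k)/C(I,2). *)
Lemma tracked_stage_lower (k : nat) I y : (1 <= k)%nat -> INR k + 3 <= I ->
  (INR k - 1) / (I - 1) <= y ->
  2 / I * ((I - 2) / I) ^ (k - 1) * (1 - y) <= (I - INR k) / (I * (I - 1) / 2).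
Proof.
  intros Hk HI Hy. set (K := INR k) in *.
  assert (HK1 : 1 <= K) by (unfold K; replace 1 with (INR 1) by reflexivity; apply le_INR; lia).
  destruct (pow_untouched_bounds I (k - 1)) as [B0 B1]; [lra|].
  assert (Hs : 0 <= (I - K) / (I * (I - 1) / 2))
    by (apply Rmult_le_pos; [lra|]; apply Rlt_le, Rinv_0_lt_compat; nra).
  destruct (Rle_dec (1 - y) 0).
  - assert (0 <= 2 / I * ((I - 2) / I) ^ (k - 1))
      by (apply Rmult_le_pos; auto; apply Rlt_le, Rdiv_lt_0_compat; lra).
    nra.
  - apply Rle_trans with (2 / I * (1 - y)).
    + apply Rmult_le_compat_r; [lra|]. rewrite <- (Rmult_1_r (2 / I)) at 2. apply Rmult_le_compat_l; auto.
      apply Rlt_le, Rdiv_lt_0_compat; lra.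
    + apply Rle_trans with (2 / I * (1 - (K - 1) / (I - 1))).
      * apply Rmult_le_compat_l; [apply Rlt_le, Rdiv_lt_0_compat; lra| lra].
      * right. field. lra.
Qed.

Lemma tracked_stage_upper (k : nat) I z : (1 <= k)%nat -> INR k + 3 <= I ->
  2 * (INR k - 1) / (I - 2) <= z ->
  (I - INR k) / (I * (I - 1) / 2) <= 2 / I * ((I - 2) / I) ^ (k - 1) * exp z.
Proof.
  intros Hk HI Hz. set (K := INR k) in *.
  assert (HK1 : 1 <= K) by (unfold K; replace 1 with (INR 1) by reflexivity; apply le_INR; lia).
  assert (E : INR (k - 1) = K - 1) by (unfold K; rewrite minus_INR by lia; simpl; lra).
  pose proof (pow_untouched_ge_exp I (k - 1)) as Hb. rewrite E in Hb.
  assert (H1 : 1 <= ((I - 2) / I) ^ (k - 1) * exp z).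
  { apply Rle_trans with (exp (- ((K - 1) * (2 / (I - 2)))) * exp z).
    - rewrite <- exp_plus, <- exp_0 at 1. apply exp_le_exp.
      replace (2 * (K - 1) / (I - 2)) with ((K - 1) * (2 / (I - 2))) in Hz by (field; lra). lra.
    - apply Rmult_le_compat_r; [apply Rlt_le, exp_pos|]. apply Hb. lra. }
  apply Rle_trans with (2 / I).
  - apply Rdiv_le_cross; [nra|lra|]. nra.
  - rewrite Rmult_assoc. rewrite <- (Rmult_1_r (2 / I)) at 1. apply Rmult_le_compat_l; auto.
    apply Rlt_le, Rdiv_lt_0_compat; lra.
Qed.

(* At a stage where no tracked tree is hit: ((I-2)/I)^k against C(I-k,2)/C(I,2). *)
Lemma untracked_stage_lower (k : nat) I y : (1 <= k)%nat -> INR k + 3 <= I ->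
  4 * INR k ^ 2 / ((I - 1) * (I - 2)) <= y ->
  ((I - 2) / I) ^ k * (1 - y) <= ((I - INR k) * (I - INR k - 1) / 2) / (I * (I - 1) / 2).
Proof.
  intros Hk HI Hy. set (K := INR k) in *.
  assert (HK1 : 1 <= K) by (unfold K; replace 1 with (INR 1) by reflexivity; apply le_INR; lia).
  destruct (pow_untouched_bounds I k) as [B0 B1]; [lra|].
  assert (Hs : 0 <= ((I - K) * (I - K - 1) / 2) / (I * (I - 1) / 2)).
  { apply Rmult_le_pos; [|apply Rlt_le, Rinv_0_lt_compat; nra]. apply Rmult_le_pos; [nra|lra]. }
  destruct (Rle_dec (1 - y) 0); [nra|].
  pose proof (pow_untouched_le I k ltac:(lra)) as Hb. fold K in Hb.
  apply Rle_trans with ((I - 2) / (I - 2 + 2 * K) * (1 - 4 * K ^ 2 / ((I - 1) * (I - 2)))).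
  - apply Rle_trans with ((I - 2) / (I - 2 + 2 * K) * (1 - y)).
    + apply Rmult_le_compat_r; lra.
    + apply Rmult_le_compat_l; [apply Rlt_le, Rdiv_lt_0_compat; lra| lra].
  - replace ((I - 2) / (I - 2 + 2 * K) * (1 - 4 * K ^ 2 / ((I - 1) * (I - 2))))
      with (((I - 1) * (I - 2) - 4 * K ^ 2) / ((I - 2 + 2 * K) * (I - 1))) by (field; lra).
    replace (((I - K) * (I - K - 1) / 2) / (I * (I - 1) / 2))
      with ((I - K) * (I - K - 1) / (I * (I - 1))) by (field; lra).
    apply Rdiv_le_cross; [nra|nra|].
    assert (0 <= (K ^ 2 + 3 * K) * I + 2 * K * (K ^ 2 - 1)) by nra.
    assert (E : (I - K) * (I - K - 1) * ((I - 2 + 2 * K) * (I - 1))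
                - ((I - 1) * (I - 2) - 4 * K ^ 2) * (I * (I - 1))
              = (I - 1) * ((K ^ 2 + 3 * K) * I + 2 * K * (K ^ 2 - 1))) by ring.
    nra.
Qed.

Lemma untracked_stage_upper (k : nat) I z : (1 <= k)%nat -> INR k + 3 <= I ->
  3 * INR k / ((I - 1) * (I - 2)) <= z ->
  ((I - INR k) * (I - INR k - 1) / 2) / (I * (I - 1) / 2) <= ((I - 2) / I) ^ k * exp z.
Proof.
  intros Hk HI Hz. set (K := INR k) in *.
  assert (HK1 : 1 <= K) by (unfold K; replace 1 with (INR 1) by reflexivity; apply le_INR; lia).
  replace (((I - K) * (I - K - 1) / 2) / (I * (I - 1) / 2))
    with ((1 + - (K / I)) * (1 + - (K / (I - 1)))) by (field; lra).
  apply Rle_trans with (exp (- (K / I)) * exp (- (K / (I - 1)))).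
  - apply Rmult_le_compat.
    + assert (K / I <= 1) by (rewrite <- (Rdiv_1_r 1); apply Rdiv_le_cross; lra). lra.
    + assert (K / (I - 1) <= 1) by (rewrite <- (Rdiv_1_r 1); apply Rdiv_le_cross; lra). lra.
    + apply exp_ineq1_le.
    + apply exp_ineq1_le.
  - apply Rle_trans with (exp (- (INR k * (2 / (I - 2)))) * exp z).
    + rewrite <- !exp_plus. fold K.
      assert (H3 : 2 * K / (I - 2) - K / I - K / (I - 1) <= 3 * K / ((I - 1) * (I - 2))).
      { replace (2 * K / (I - 2) - K / I - K / (I - 1))
          with (K * (3 * I - 2) / (I * (I - 1) * (I - 2))) by (field; lra).
        apply Rdiv_le_cross; [nra|nra|].
        assert (0 <= K * ((I - 1) * (I - 2))) by (apply Rmult_le_pos; nra).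
        assert (E : 3 * K * (I * (I - 1) * (I - 2)) - K * (3 * I - 2) * ((I - 1) * (I - 2))
                    = 2 * (K * ((I - 1) * (I - 2)))) by ring.
        lra. }
      apply exp_le_exp. replace (K * (2 / (I - 2))) with (2 * K / (I - 2)) by (field; lra). lra.
    + apply Rmult_le_compat_r; [apply Rlt_le, exp_pos|]. apply pow_untouched_ge_exp. lra.
Qed.

Definition sumR (f : nat -> R) (l : list nat) : R := fold_right Rplus 0 (map f l).

Lemma sumR_cons f i l : sumR f (i :: l) = f i + sumR f l.
Proof. reflexivity. Qed.

Lemma sumR_app f l1 l2 : sumR f (l1 ++ l2) = sumR f l1 + sumR f l2.
Proof. unfold sumR. induction l1; simpl; [ring|]. rewrite IHl1. ring. Qed.

Lemma sumR_plus f g l : sumR (fun x => f x + g x) l = sumR f l + sumR g l.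
Proof. unfold sumR. induction l; simpl; [ring|]. rewrite IHl. ring. Qed.

Lemma sumR_nonneg f l : (forall x, In x l -> 0 <= f x) -> 0 <= sumR f l.
Proof. unfold sumR. induction l; simpl; intros H; [lra|]. apply Rplus_le_le_0_compat; auto. Qed.

Lemma prodR_compare (s r e : nat -> R) l :
  (forall i, In i l -> 0 <= s i /\ 0 <= r i /\ 0 <= e i /\ r i * (1 - e i) <= s i <= r i * exp (e i)) ->
  prodR r l * (1 - sumR e l) <= prodR s l <= prodR r l * exp (sumR e l).
Proof.
  induction l as [|i l IH]; intros H.
  - unfold prodR, sumR. simpl. rewrite exp_0. lra.
  - rewrite !prodR_cons, sumR_cons, exp_plus.
    destruct (H i (or_introl eq_refl)) as [Hs [Hr [He [Hlo Hhi]]]].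
    assert (Hl : forall j, In j l ->
                   0 <= s j /\ 0 <= r j /\ 0 <= e j /\ r j * (1 - e j) <= s j <= r j * exp (e j))
      by (intros; apply H; right; auto).
    destruct (IH Hl) as [IHlo IHhi].
    assert (HS : 0 <= prodR s l) by (apply prodR_nonneg; intros; apply Hl; auto).
    assert (HR : 0 <= prodR r l) by (apply prodR_nonneg; intros; apply Hl; auto).
    assert (HE : 0 <= sumR e l) by (apply sumR_nonneg; intros; apply Hl; auto).
    pose proof (exp_pos (e i)). pose proof (exp_pos (sumR e l)).
    split.
    + destruct (Rle_dec (1 - (e i + sumR e l)) 0).
      * assert (0 <= r i * prodR r l) by nra. nra.
      * (* (1 - a)(1 - b) >= 1 - a - b for a, b >= 0 *)
        apply Rle_trans with (r i * (1 - e i) * (prodR r l * (1 - sumR e l))).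
        -- assert (0 <= r i * prodR r l * (e i * sumR e l)) by (repeat apply Rmult_le_pos; auto). nra.
        -- apply Rmult_le_compat; nra.
    + apply Rle_trans with (r i * exp (e i) * (prodR r l * exp (sumR e l))); [apply Rmult_le_compat; auto|].
      right. ring.
Qed.

Lemma sumR_telescope c L m : (2 <= L)%nat ->
  sumR (fun i => c / ((INR i - 1) * (INR i - 2))) (seq (S L) m) = c / (INR L - 1) - c / (INR (L + m) - 1).
Proof.
  revert L; induction m as [|m IH]; intros L HL.
  - rewrite Nat.add_0_r. unfold sumR. simpl. ring.
  - cbn [seq]. rewrite sumR_cons, IH by lia.
    replace (S L + m)%nat with (L + S m)%nat by lia.
    assert (2 <= INR L) by (replace 2 with (INR 2) by reflexivity; apply le_INR; auto).
    rewrite S_INR. set (T := c / (INR (L + S m) - 1)). field. lra.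
Qed.

Lemma sumR_indicator_le (u : nat -> bool) (d : nat -> R) D a m :
  (forall i, In i (seq a m) -> d i <= D) -> 0 <= D ->
  sumR (fun i => if u i then d i else 0) (seq a m) <= D * INR (count_below (a + m) u).
Proof.
  intros Hd HD. enough (H : sumR (fun i => if u i then d i else 0) (seq a m)
                           <= D * (INR (count_below (a + m) u) - INR (count_below a u))).
  { pose proof (pos_INR (count_below a u)). nra. }
  induction m as [|m IH].
  - rewrite Nat.add_0_r. unfold sumR. simpl. lra.
  - rewrite seq_S, sumR_app, Nat.add_succ_r, count_below_S, plus_INR.
    assert (Hdm : d (a + m)%nat <= D) by (apply Hd, in_seq; lia).
    assert (IH' := IH ltac:(intros; apply Hd; rewrite seq_S; apply in_or_app; auto)).
    unfold sumR at 2. simpl. destruct (u (a + m)%nat); simpl; lra.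
Qed.

Definition stage_error (K : R) (U : nat -> bool) (i : nat) : R :=
  4 * K ^ 2 / ((INR i - 1) * (INR i - 2)) + (if U i then 2 * K / (INR i - 2) else 0).

Lemma sumR_stage_error K U L n : (2 <= L <= n)%nat -> 0 <= K ->
  sumR (stage_error K U) (seq (S L) (n - L))
  <= (4 * K ^ 2 + 2 * K * INR (count_below (S n) U)) / (INR L - 1).
Proof.
  intros HL HK. assert (2 <= INR L) by (replace 2 with (INR 2) by reflexivity; apply le_INR; lia).
  assert (HnL : 2 <= INR (L + (n - L))) by (replace 2 with (INR 2) by reflexivity; apply le_INR; lia).
  unfold stage_error. rewrite sumR_plus, sumR_telescope by lia.
  pose proof (sumR_indicator_le U (fun i => 2 * K / (INR i - 2)) (2 * K / (INR L - 1)) (S L) (n - L)) as HU.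
  replace (S L + (n - L))%nat with (S n) in HU by lia.
  assert (0 <= 4 * K ^ 2 / (INR (L + (n - L)) - 1))
    by (apply Rmult_le_pos; [nra|]; apply Rlt_le, Rinv_0_lt_compat; lra).
  assert (HU' : sumR (fun i => if U i then 2 * K / (INR i - 2) else 0) (seq (S L) (n - L))
                <= 2 * K / (INR L - 1) * INR (count_below (S n) U)).
  { apply HU; [|apply Rmult_le_pos; [lra|]; apply Rlt_le, Rinv_0_lt_compat; lra].
    intros i Hi. apply in_seq in Hi. assert (INR L + 1 <= INR i) by (rewrite <- S_INR; apply le_INR; lia).
    apply Rdiv_le_cross; nra. }
  replace ((4 * K ^ 2 + 2 * K * INR (count_below (S n) U)) / (INR L - 1))
    with (4 * K ^ 2 / (INR L - 1) + 2 * K / (INR L - 1) * INR (count_below (S n) U)) by (field; lra).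
  lra.
Qed.

Lemma prodR_at_most_one f (b : nat -> bool) A B l : NoDup l ->
  (forall j, In j l -> f j = if b j then A else B) ->
  (forall j1 j2, In j1 l -> In j2 l -> b j1 = true -> b j2 = true -> j1 = j2) ->
  prodR f l = if existsb b l then A * B ^ (length l - 1) else B ^ length l.
Proof.
  induction l as [|j l IH]; intros Hnd Hf Hb; [reflexivity|].
  inversion Hnd as [|? ? Hj Hnd']; subst.
  rewrite prodR_cons, (Hf j (or_introl eq_refl)), IH; auto.
  2: intros; apply Hf; simpl; auto.
  2: intros; apply Hb; simpl; auto.
  simpl. rewrite Nat.sub_0_r.
  destruct (b j) eqn:Ej.
  - replace (existsb b l) with false; [simpl; ring|].
    symmetry. apply not_true_iff_false. intros E. apply existsb_exists in E as [j' [Hj' E']].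
    apply Hj. rewrite (Hb j j'); simpl; auto.
  - destruct (existsb b l) eqn:E; simpl; [|ring].
    destruct l; [discriminate|]. simpl. rewrite Nat.sub_0_r. ring.
Qed.

Lemma stage_ratio_above L K U i : (L < i)%nat -> (K <= i)%nat ->
  stage_ratio L K U i = if U i then (INR i - INR K) / (INR i * (INR i - 1) / 2)
                        else ((INR i - INR K) * (INR i - INR K - 1) / 2) / (INR i * (INR i - 1) / 2).
Proof.
  intros HL HK. unfold stage_ratio, compatible_pairs. destruct (Nat.leb_spec i L); [lia|].
  destruct (U i); rewrite !INR_choose2, ?minus_INR by lia; reflexivity.
Qed.

Lemma prodR_single_stage_ratio L k J i : (L < i)%nat -> (2 <= i)%nat ->
  (forall v w, (1 <= v <= k)%nat -> (1 <= w <= k)%nat -> v <> w -> J v i = true -> J w i = false) ->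
  prodR (fun v => stage_ratio L 1 (J v) i) (seq 1 k)
  = if union_stages k J i then 2 / INR i * ((INR i - 2) / INR i) ^ (k - 1)
    else ((INR i - 2) / INR i) ^ k.
Proof.
  intros HLi Hi Hdisj.
  assert (HI : 2 <= INR i) by (replace 2 with (INR 2) by reflexivity; apply le_INR; lia).
  rewrite (prodR_at_most_one _ (fun v => J v i) (2 / INR i) ((INR i - 2) / INR i)), length_seq.
  - reflexivity.
  - apply seq_NoDup.
  - intros v _. rewrite stage_ratio_above by lia. simpl INR. destruct (J v i); field; lra.
  - intros v w Hv Hw Ev Ew. apply in_seq in Hv, Hw.
    destruct (Nat.eq_dec v w); auto. rewrite (Hdisj v w) in Ew by (auto; lia). discriminate.
Qed.

Lemma stage_ratio_bounds L k J i : (1 <= k)%nat -> (k + 3 <= L < i)%nat ->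
  (forall v w, (1 <= v <= k)%nat -> (1 <= w <= k)%nat -> v <> w -> J v i = true -> J w i = false) ->
  0 <= stage_ratio L k (union_stages k J) i /\
  0 <= prodR (fun v => stage_ratio L 1 (J v) i) (seq 1 k) /\
  0 <= stage_error (INR k) (union_stages k J) i /\
  prodR (fun v => stage_ratio L 1 (J v) i) (seq 1 k) * (1 - stage_error (INR k) (union_stages k J) i)
    <= stage_ratio L k (union_stages k J) i
    <= prodR (fun v => stage_ratio L 1 (J v) i) (seq 1 k) * exp (stage_error (INR k) (union_stages k J) i).
Proof.
  intros Hk HLi Hdisj.
  rewrite prodR_single_stage_ratio, stage_ratio_above by (auto; lia).
  unfold stage_error. set (I := INR i). set (K := INR k).
  assert (HK : 1 <= K) by (unfold K; replace 1 with (INR 1) by reflexivity; apply le_INR; lia).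
  assert (HI : K + 4 <= I)
    by (unfold I, K; replace 4 with (INR 4) by (simpl; lra); rewrite <- plus_INR; apply le_INR; lia).
  destruct (pow_untouched_bounds I (k - 1) ltac:(lra)).
  destruct (pow_untouched_bounds I k ltac:(lra)).
  assert (He0 : 0 <= 4 * K ^ 2 / ((I - 1) * (I - 2)))
    by (apply Rmult_le_pos; [nra|]; apply Rlt_le, Rinv_0_lt_compat; nra).
  assert (He1 : 0 <= 2 * K / (I - 2)) by (apply Rmult_le_pos; [lra|]; apply Rlt_le, Rinv_0_lt_compat; lra).
  destruct (union_stages k J i); repeat split.
  - apply Rmult_le_pos; [lra|]. apply Rlt_le, Rinv_0_lt_compat. nra.
  - apply Rmult_le_pos; auto. apply Rlt_le, Rdiv_lt_0_compat; lra.
  - lra.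
  - apply tracked_stage_lower; auto; fold K; [lra|].
    assert ((K - 1) / (I - 1) <= 2 * K / (I - 2)) by (apply Rdiv_le_cross; nra). lra.
  - apply tracked_stage_upper; auto; fold K; [lra|].
    assert (2 * (K - 1) / (I - 2) <= 2 * K / (I - 2)) by (apply Rdiv_le_cross; nra). lra.
  - apply Rmult_le_pos; [|apply Rlt_le, Rinv_0_lt_compat; nra]. apply Rmult_le_pos; [nra|lra].
  - auto.
  - lra.
  - apply untracked_stage_lower; auto; fold K; lra.
  - apply untracked_stage_upper; auto; fold K; [lra|].
    assert (HD : 0 < (I - 1) * (I - 2)) by nra.
    assert (3 * K / ((I - 1) * (I - 2)) <= 4 * K ^ 2 / ((I - 1) * (I - 2)))
      by (apply Rdiv_le_cross, Rmult_le_compat_r; auto; nra).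
    lra.
Qed.

Lemma probS_probR_bounds n k J : (1 <= k)%nat -> (k + 3 <= Lcut n < n)%nat ->
  (forall v, (1 <= v <= k)%nat -> forall m, J v m = true -> (Lcut n < m)%nat) ->
  (forall v w, (1 <= v <= k)%nat -> (1 <= w <= k)%nat -> v <> w ->
     forall m, J v m = true -> J w m = false) ->
  let E := (4 * INR k ^ 2 + 2 * INR k * INR (count_below (S n) (union_stages k J))) / (INR (Lcut n) - 1) in
  probR n k J * (1 - E) <= probS n k J <= probR n k J * exp E.
Proof.
  intros Hk HL Hsupp Hdisj E.
  rewrite probS_product, probR_product by (auto; lia).
  assert (HE : sumR (stage_error (INR k) (union_stages k J)) (seq (S (Lcut n)) (n - Lcut n)) <= E)
    by (apply sumR_stage_error; [lia|apply pos_INR]).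
  assert (HR : 0 <= prodR (fun i => prodR (fun v => stage_ratio (Lcut n) 1 (J v) i) (seq 1 k))
                         (seq (S (Lcut n)) (n - Lcut n))).
  { apply prodR_nonneg. intros i Hi. apply in_seq in Hi.
    apply (stage_ratio_bounds (Lcut n) k J i); [lia|lia|intros v w ? ? ?; apply Hdisj; auto]. }
  destruct (prodR_compare (stage_ratio (Lcut n) k (union_stages k J))
              (fun i => prodR (fun v => stage_ratio (Lcut n) 1 (J v) i) (seq 1 k))
              (stage_error (INR k) (union_stages k J)) (seq (S (Lcut n)) (n - Lcut n))) as [Hlo Hhi].
  { intros i Hi. apply in_seq in Hi.
    apply stage_ratio_bounds; [lia|lia|intros v w ? ? ?; apply Hdisj; auto]. }
  pose proof (exp_le_exp _ _ HE). split; nra.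
Qed.

(** * Asymptotics *)

Lemma eventually_ln_gt X : exists N, forall n, (N <= n)%nat -> X < ln (INR n).
Proof.
  exists (Z.to_nat (up (exp X))). intros n Hn.
  destruct (archimed (exp X)) as [Hup _].
  assert (Hz : (0 <= up (exp X))%Z) by (apply le_IZR; pose proof (exp_pos X); lra).
  apply le_INR in Hn. rewrite INR_IZR_INZ, Z2Nat.id in Hn by auto.
  rewrite <- (ln_exp X). apply ln_increasing; [apply exp_pos|lra].
Qed.

Lemma Lcut_ge n : ln (INR n) ^ 2 - 1 <= INR (Lcut n).
Proof.
  unfold Lcut. set (r := ln (INR n) ^ 2).
  assert (0 <= r) by (unfold r; rewrite <- Rsqr_pow2; apply Rle_0_sqr).
  destruct (base_Int_part r) as [H1 H2].
  assert (HZ : (0 <= Int_part r)%Z) by (apply Z.lt_succ_r, lt_IZR; rewrite succ_IZR; simpl; lra).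
  rewrite INR_IZR_INZ, Z2Nat.id by auto. lra.
Qed.

Lemma INR_count_union_le i k J B : (forall v, (1 <= v <= k)%nat -> INR (count_below i (J v)) <= B) ->
  INR (count_below i (union_stages k J)) <= INR k * B.
Proof.
  unfold union_stages. induction k as [|k IH]; intros H.
  - simpl. rewrite count_below_false. simpl. lra.
  - rewrite (count_below_ext i _ (fun m => existsb (fun v => J v m) (seq 1 k) || J (S k) m)).
    2:{ intros. rewrite seq_S, existsb_app. simpl. rewrite orb_false_r. reflexivity. }
    eapply Rle_trans; [apply le_INR, count_below_orb|]. rewrite plus_INR, S_INR.
    pose proof (IH ltac:(intros; apply H; lia)). pose proof (H (S k) ltac:(lia)). lra.
Qed.

Lemma Lcut_lt n k delta J : (1 <= k)%nat -> delta < 2 -> 0 < ln (INR n) -> in_B n k delta J ->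
  (Lcut n < n)%nat.
Proof.
  intros Hk Hd Hx [Hsupp [_ Hcard]].
  specialize (Hcard 1%nat ltac:(lia)).
  assert (Hpos : 0 < INR (card_upto n (J 1%nat))).
  { pose proof (Rle_abs (- (INR (card_upto n (J 1%nat)) - 2 * ln (INR n)))) as Habs.
    rewrite Rabs_Ropp in Habs. nra. }
  change 0 with (INR 0) in Hpos. apply INR_lt in Hpos.
  destruct (count_below_witness _ _ Hpos) as [m [Hm Em]].
  specialize (Hsupp 1%nat ltac:(lia) m Em). lia.
Qed.

Lemma le_Lcut k n : INR k + 4 < ln (INR n) -> (k + 3 <= Lcut n)%nat.
Proof.
  intros Hx. pose proof (Lcut_ge n). pose proof (pos_INR k).
  apply INR_le. rewrite plus_INR. simpl (INR 3). nra.
Qed.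

Lemma count_union_le_of_in_B n k delta J : delta < 2 -> 0 <= ln (INR n) -> in_B n k delta J ->
  INR (count_below (S n) (union_stages k J)) <= INR k * (4 * ln (INR n)).
Proof.
  intros Hd Hx [_ [_ Hcard]]. apply INR_count_union_le. intros v Hv. specialize (Hcard v Hv).
  change (card_upto n (J v)) with (count_below (S n) (J v)) in Hcard.
  pose proof (Rle_abs (INR (count_below (S n) (J v)) - 2 * ln (INR n))). nra.
Qed.

Lemma prob_coal_nonneg n ev : 0 <= prob_coal n ev.
Proof.
  unfold prob_coal. destruct (Nat.eq_dec (length (outcomes n)) 0) as [->|H].
  - simpl. unfold Rdiv. rewrite Rinv_0. lra.
  - apply Rmult_le_pos; [apply pos_INR|]. apply Rlt_le, Rinv_0_lt_compat, lt_0_INR. lia.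
Qed.

Lemma probR_nonneg n k J : 0 <= probR n k J.
Proof. apply prodR_nonneg. intros. apply prob_coal_nonneg. Qed.

Lemma Rabs_sub_le_of_bounds R S E eps : 0 <= R -> R * (1 - E) <= S <= R * exp E -> 0 < eps ->
  E <= Rmin eps (ln (1 + eps)) -> Rabs (S - R) <= eps * R.
Proof.
  intros HR [Hlo Hhi] Heps HE.
  pose proof (Rmin_l eps (ln (1 + eps))). pose proof (Rmin_r eps (ln (1 + eps))).
  assert (He : E <= eps) by lra. assert (Hl : E <= ln (1 + eps)) by lra.
  assert (exp E <= 1 + eps) by (rewrite <- (exp_ln (1 + eps)) by lra; apply exp_le_exp; auto).
  apply Rabs_le. split; nra.
Qed.

Lemma coupling_error_le K x L c m : 1 <= K -> 2 <= x -> 0 < m -> 24 * K ^ 2 / m <= x ->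
  x ^ 2 - 1 <= L -> 0 <= c <= K * (4 * x) -> (4 * K ^ 2 + 2 * K * c) / (L - 1) <= m.
Proof.
  intros HK Hx Hm Hxm HL Hc.
  assert (HL1 : x ^ 2 / 2 <= L - 1) by nra.
  assert (H24 : 24 * K ^ 2 <= m * x).
  { apply (Rmult_le_compat_r m) in Hxm; [|lra].
    unfold Rdiv in Hxm. rewrite Rmult_assoc, Rinv_l in Hxm by lra. lra. }
  assert (Hnum : 4 * K ^ 2 + 2 * K * c <= 12 * K ^ 2 * x) by nra.
  assert (Hden : 12 * K ^ 2 * x <= m * (L - 1)) by nra.
  unfold Rdiv. apply (Rmult_le_reg_r (L - 1)); [nra|].
  rewrite Rmult_assoc, Rinv_l by nra. lra.
Qed.

Theorem proposition4p5 (k : nat) (delta : R) :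
  (2 <= k)%nat -> 0 < delta < 2 ->
  forall eps : R, eps > 0 ->
  exists N : nat, forall n : nat, (N <= n)%nat ->
  forall J : nat -> nat -> bool, in_B n k delta J ->
  Rabs (probS n k J - probR n k J) <= eps * probR n k J.
Proof.
  intros Hk Hdelta eps Heps.
  set (K := INR k).
  assert (HK : 2 <= K) by (unfold K; replace 2 with (INR 2) by reflexivity; apply le_INR; auto).
  set (m := Rmin eps (ln (1 + eps))).
  assert (Hm : 0 < m) by (apply Rmin_glb_lt; [lra|rewrite <- ln_1; apply ln_increasing; lra]).
  destruct (eventually_ln_gt (Rmax (K + 4) (24 * K ^ 2 / m))) as [N HN].
  exists N. intros n Hn J HB.
  pose proof (HN n Hn) as Hx. set (x := ln (INR n)) in Hx.
  pose proof (Rmax_l (K + 4) (24 * K ^ 2 / m)). pose proof (Rmax_r (K + 4) (24 * K ^ 2 / m)).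
  pose proof (Lcut_ge n) as HL. fold x in HL.
  pose proof (Lcut_lt n k delta J ltac:(lia) ltac:(lra) ltac:(fold x; lra) HB) as HLn.
  pose proof (le_Lcut k n ltac:(fold x K; lra)) as HLk.
  pose proof (count_union_le_of_in_B n k delta J ltac:(lra) ltac:(fold x; lra) HB) as Hc.
  destruct HB as [Hsupp [Hdisj _]].
  pose proof (probS_probR_bounds n k J ltac:(lia) ltac:(lia)
                (fun v Hv m0 E => proj1 (Hsupp v Hv m0 E)) Hdisj) as Hb.
  apply (Rabs_sub_le_of_bounds _ _ _ _ (probR_nonneg n k J) Hb Heps).
  apply coupling_error_le with x; fold K m; try lra.
  split; [apply pos_INR|auto].
Qed.
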